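(* Let $K$ be a finite subgroup of $U(\mathbb{H})$ and consider the reflection system $L=K$. Then $H_K=[K,K]=\langle aba^{-1}b^{-1}: a,b\in K\rangle$, the commutator subgroup of $K$. Therefore the reflection groups in canonical form with $L=K$ are the groups $G_K(K,H)$ where $H$ is a subgroup of $K$ with $[K,K]\subseteq H\subseteq K$ (any such $H$ is automatically normal in $K$).
   Context: $\mathbb{H}$ is the real quaternion algebra with basis $1,i,j,k$ and $U(\mathbb{H})$ its group of unit quaternions. For a group $K$ and $a,b\in K$ put $a\circ b:=ab^{-1}a$. A reflection system for a finite group $K$ is a subset $L\subseteq K$ which generates $K$, is closed under $\circ$, and contains $1$ (so $K$ itself is a reflection system for $K$). For $b\in K$ let $M_b=\begin{pmatrix}0&b\\ b^{-1}&0\end{pmatrix}$. For a reflection system $L$, $H_L:=\{h\in K:\mathrm{diag}(h,1)\in\langle M_b: b\in L\rangle\}$. For $H\trianglelefteq K$ with $H\subseteq L$, $LH=L$, $G(K,L,H)$ is the subgroup of $U(\mathbb{H}^2)$ generated by $\mathrm{diag}(h,1),\mathrm{diag}(1,h)$ ($h\in H$) and $M_b$ ($b\in L$); it is in canonical form, written $G_K(L,H)$, if $\{b\in K: M_b\in G(K,L,H)\}=L$. *)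

From HB Require Import structures.
From mathcomp Require Import all_boot all_order all_algebra.
From mathcomp Require Import reals.
From Stdlib Require List.
Set Implicit Arguments. Unset Strict Implicit. Unset Printing Implicit Defensive.
Import Order.TTheory GRing.Theory Num.Theory.
Local Open Scope ring_scope.

Section Quat.
Variable R : realType.

Record quat := Quat { qr : R; qi : R; qj : R; qk : R }.

Definition q1 : quat := Quat 1 0 0 0.
Definition q0 : quat := Quat 0 0 0 0.

Definition qmul (x y : quat) : quat :=
  Quat (qr x * qr y - qi x * qi y - qj x * qj y - qk x * qk y)
       (qr x * qi y + qi x * qr y + qj x * qk y - qk x * qj y)
       (qr x * qj y - qi x * qk y + qj x * qr y + qk x * qi y)
       (qr x * qk y + qi x * qj y - qj x * qi y + qk x * qr y).

Definition qadd (x y : quat) : quat :=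
  Quat (qr x + qr y) (qi x + qi y) (qj x + qj y) (qk x + qk y).

Definition qconj (x : quat) : quat := Quat (qr x) (- qi x) (- qj x) (- qk x).

Definition qnorm2 (x : quat) : R := qr x ^+ 2 + qi x ^+ 2 + qj x ^+ 2 + qk x ^+ 2.

Definition qinv (x : quat) : quat :=
  let n := (qnorm2 x)^-1 in Quat (qr x * n) (- qi x * n) (- qj x * n) (- qk x * n).

Definition unitq (x : quat) : Prop := qnorm2 x = 1.

Inductive gen (T : Type) (mul : T -> T -> T) (inv : T -> T) (one : T)
    (S : T -> Prop) : T -> Prop :=
  | gen_in x : S x -> gen mul inv one S x
  | gen_one : gen mul inv one S one
  | gen_mul x y : gen mul inv one S x -> gen mul inv one S y -> gen mul inv one S (mul x y)
  | gen_inv x : gen mul inv one S x -> gen mul inv one S (inv x).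

Definition is_qsubgroup (K : quat -> Prop) : Prop :=
  [/\ K q1, (forall x y, K x -> K y -> K (qmul x y)) & (forall x, K x -> K (qinv x))].

Definition finite_subgroup_UH (K : quat -> Prop) : Prop :=
  [/\ is_qsubgroup K, (forall x, K x -> unitq x)
    & exists s : seq quat, forall x, K x -> List.In x s].

Definition commK (K : quat -> Prop) : quat -> Prop :=
  gen qmul qinv q1 (fun x => exists a b, [/\ K a, K b &
                       x = qmul (qmul (qmul a b) (qinv a)) (qinv b)]).

Definition qcirc (a b : quat) : quat := qmul (qmul a (qinv b)) a.

Definition reflection_system (K L : quat -> Prop) : Prop :=
  [/\ (forall x, L x -> K x),
      (forall x, K x <-> gen qmul qinv q1 L x),
      (forall a b, L a -> L b -> L (qcirc a b)) & L q1].

Record qmat := QMat { m11 : quat; m12 : quat; m21 : quat; m22 : quat }.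

Definition mmul (A B : qmat) : qmat :=
  QMat (qadd (qmul (m11 A) (m11 B)) (qmul (m12 A) (m21 B)))
       (qadd (qmul (m11 A) (m12 B)) (qmul (m12 A) (m22 B)))
       (qadd (qmul (m21 A) (m11 B)) (qmul (m22 A) (m21 B)))
       (qadd (qmul (m21 A) (m12 B)) (qmul (m22 A) (m22 B))).

(** Conjugate transpose: the inverse in U(H^2). *)
Definition mstar (A : qmat) : qmat :=
  QMat (qconj (m11 A)) (qconj (m21 A)) (qconj (m12 A)) (qconj (m22 A)).

Definition mone : qmat := QMat q1 q0 q0 q1.

Definition diagm (x y : quat) : qmat := QMat x q0 q0 y.

Definition Mb (b : quat) : qmat := QMat q0 b (qinv b) q0.

Definition mgen (S : qmat -> Prop) : qmat -> Prop := gen mmul mstar mone S.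

Definition H_L (K L : quat -> Prop) (h : quat) : Prop :=
  K h /\ mgen (fun M => exists b, L b /\ M = Mb b) (diagm h q1).

Definition GKLH (K L H : quat -> Prop) : qmat -> Prop :=
  mgen (fun M => (exists h, H h /\ (M = diagm h q1 \/ M = diagm q1 h))
                 \/ (exists b, L b /\ M = Mb b)).

Definition normal_in (H K : quat -> Prop) : Prop :=
  [/\ is_qsubgroup H, (forall x, H x -> K x)
    & forall k h, K k -> H h -> H (qmul (qmul k h) (qinv k))].

Definition admissible (K L H : quat -> Prop) : Prop :=
  [/\ normal_in H K, (forall x, H x -> L x)
    & forall l, K l -> (L l <-> exists l' h, [/\ L l', H h & l = qmul l' h])].

Definition canonical_form (K L H : quat -> Prop) : Prop :=
  forall b, K b -> (GKLH K L H (Mb b) <-> L b).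

End Quat.

(* With L = K every M_b, b in K, is a generator, and M_a M_b = diag(a b^-1, a^-1 b);
   the commutator diag([a,b], 1) is the product of three such matrices, so
   [K,K] is contained in H_K.  Conversely every element of <M_b : b in K> is
   diagonal or antidiagonal with entries (x, y) such that x y lies in [K,K]:
   this holds for M_b = (b, b^-1) and is preserved by products and inverses
   because K/[K,K] is abelian.  For diag(h, 1) it says h is in [K,K].
   Any G(K,K,H) equals G(K,K,H') for H' = {x in K | diag(x,1) in G(K,K,H)},
   which contains [K,K]; and for [K,K] <= H <= K the datum (K,K,H) is
   admissible and in canonical form since every M_b is a generator. *)

From mathcomp Require Import all_boot all_order all_algebra reals.
From mathcomp Require Import ring.
Set Implicit Arguments. Unset Strict Implicit. Unset Printing Implicit Defensive.
Import Order.TTheory GRing.Theory Num.Theory.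
Local Open Scope ring_scope.

Section Quaternions.
Variable R : realType.
Implicit Types x y z : quat R.

Lemma qmulA x y z : qmul (qmul x y) z = qmul x (qmul y z).
Proof. by case: x y z => [????] [????] [????]; congr Quat; rewrite /=; ring. Qed.

Lemma qmul1q x : qmul (q1 R) x = x.
Proof. by case: x => ????; congr Quat; rewrite /=; ring. Qed.

Lemma qmulq1 x : qmul x (q1 R) = x.
Proof. by case: x => ????; congr Quat; rewrite /=; ring. Qed.

Lemma qmul0q x : qmul (q0 R) x = q0 R.
Proof. by case: x => ????; congr Quat; rewrite /=; ring. Qed.

Lemma qmulq0 x : qmul x (q0 R) = q0 R.
Proof. by case: x => ????; congr Quat; rewrite /=; ring. Qed.

Lemma qadd0q x : qadd (q0 R) x = x.
Proof. by case: x => ????; congr Quat; rewrite /=; ring. Qed.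

Lemma qaddq0 x : qadd x (q0 R) = x.
Proof. by case: x => ????; congr Quat; rewrite /=; ring. Qed.

Lemma qconj0 : qconj (q0 R) = q0 R.
Proof. by rewrite /qconj /= oppr0. Qed.

Lemma qconj1 : qconj (q1 R) = q1 R.
Proof. by rewrite /qconj /= oppr0. Qed.

Lemma qconjM x y : qconj (qmul x y) = qmul (qconj y) (qconj x).
Proof. by case: x y => [????] [????]; congr Quat; rewrite /=; ring. Qed.

Lemma qconjK x : qconj (qconj x) = x.
Proof. by case: x => ????; rewrite /qconj /= !opprK. Qed.

Lemma qnorm2M x y : qnorm2 (qmul x y) = qnorm2 x * qnorm2 y.
Proof. by case: x y => [????] [????]; rewrite /qnorm2 /=; ring. Qed.

Lemma qnorm2_conj x : qnorm2 (qconj x) = qnorm2 x.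
Proof. by case: x => ????; rewrite /qnorm2 /= !sqrrN. Qed.

Lemma qmul_conj x : qmul x (qconj x) = Quat (qnorm2 x) 0 0 0.
Proof. by case: x => ????; congr Quat; rewrite /qnorm2 /=; ring. Qed.

Lemma qmul_conjl x : qmul (qconj x) x = Quat (qnorm2 x) 0 0 0.
Proof. by case: x => ????; congr Quat; rewrite /qnorm2 /=; ring. Qed.

Lemma qinvE x : unitq x -> qinv x = qconj x.
Proof. by rewrite /unitq /qinv => ->; rewrite invr1 !mulr1; case: x. Qed.

Lemma unitq1 : unitq (q1 R).
Proof. by rewrite /unitq /qnorm2 /= expr1n expr0n /= !addr0. Qed.

Lemma unitqM x y : unitq x -> unitq y -> unitq (qmul x y).
Proof. by rewrite /unitq qnorm2M => -> ->; rewrite mulr1. Qed.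

Lemma unitqV x : unitq x -> unitq (qinv x).
Proof. by move=> ux; rewrite qinvE // /unitq qnorm2_conj. Qed.

Lemma qinv1 : qinv (q1 R) = q1 R.
Proof. by rewrite qinvE ?qconj1 //; apply: unitq1. Qed.

Lemma qmulqV x : unitq x -> qmul x (qinv x) = q1 R.
Proof. by move=> ux; rewrite qinvE // qmul_conj ux. Qed.

Lemma qmulVq x : unitq x -> qmul (qinv x) x = q1 R.
Proof. by move=> ux; rewrite qinvE // qmul_conjl ux. Qed.

Lemma qmulKq x z : unitq x -> qmul (qinv x) (qmul x z) = z.
Proof. by move=> ux; rewrite -qmulA qmulVq // qmul1q. Qed.

Lemma qinvM x y : unitq x -> unitq y -> qinv (qmul x y) = qmul (qinv y) (qinv x).
Proof. by move=> ux uy; rewrite !qinvE ?qconjM //; apply: unitqM. Qed.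

Lemma qinvK x : unitq x -> qinv (qinv x) = x.
Proof. by move=> ux; rewrite (qinvE ux) qinvE ?qconjK // /unitq qnorm2_conj. Qed.

Lemma qconjgM k x y : unitq k ->
  qmul (qmul k (qmul x y)) (qinv k)
  = qmul (qmul (qmul k x) (qinv k)) (qmul (qmul k y) (qinv k)).
Proof. by move=> uk; rewrite !qmulA qmulKq. Qed.

Lemma qconjgV k x : unitq k -> unitq x ->
  qmul (qmul k (qinv x)) (qinv k) = qinv (qmul (qmul k x) (qinv k)).
Proof.
move=> uk ux; rewrite qinvM ?qinvK ?qinvM ?qmulA //.
- exact: unitqM.
- exact: unitqV.
Qed.

End Quaternions.

Section Generation.
Variables (T : Type) (mul : T -> T -> T) (inv : T -> T) (one : T).
Implicit Types S P : T -> Prop.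

Lemma gen_closed S P : (forall x, S x -> P x) -> P one ->
  (forall x y, P x -> P y -> P (mul x y)) -> (forall x, P x -> P (inv x)) ->
  forall x, gen mul inv one S x -> P x.
Proof. by move=> SP P1 PM PV x; elim=> *; auto. Qed.

Lemma gen_mono S S' : (forall x, S x -> gen mul inv one S' x) ->
  forall x, gen mul inv one S x -> gen mul inv one S' x.
Proof. by move=> SS'; apply: gen_closed => //; [apply: gen_one|apply: gen_mul|apply: gen_inv]. Qed.

End Generation.

Section MonomialMatrices.
Variable R : realType.
Implicit Types (x y : quat R) (S : qmat R -> Prop).

Definition antim x y : qmat R := QMat (q0 R) x y (q0 R).

Lemma diagm_mul x y x' y' :
  mmul (diagm x y) (diagm x' y') = diagm (qmul x x') (qmul y y').
Proof. by rewrite /mmul /= !(qmul0q, qmulq0, qadd0q, qaddq0). Qed.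

Lemma diagm_antim_mul x y x' y' :
  mmul (diagm x y) (antim x' y') = antim (qmul x x') (qmul y y').
Proof. by rewrite /mmul /= !(qmul0q, qmulq0, qadd0q, qaddq0). Qed.

Lemma antim_diagm_mul x y x' y' :
  mmul (antim x y) (diagm x' y') = antim (qmul x y') (qmul y x').
Proof. by rewrite /mmul /= !(qmul0q, qmulq0, qadd0q, qaddq0). Qed.

Lemma antim_mul x y x' y' :
  mmul (antim x y) (antim x' y') = diagm (qmul x y') (qmul y x').
Proof. by rewrite /mmul /= !(qmul0q, qmulq0, qadd0q, qaddq0). Qed.

Lemma mstar_diagm x y : mstar (diagm x y) = diagm (qconj x) (qconj y).
Proof. by rewrite /mstar /= qconj0. Qed.

Lemma mstar_antim x y : mstar (antim x y) = antim (qconj y) (qconj x).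
Proof. by rewrite /mstar /= qconj0. Qed.

Definition monomial_with (P : quat R -> quat R -> Prop) (M : qmat R) : Prop :=
  exists x y, P x y /\ (M = diagm x y \/ M = antim x y).

Lemma mgen_monomial_with (P : quat R -> quat R -> Prop) S :
  P (q1 R) (q1 R) ->
  (forall x y x' y', P x y -> P x' y' -> P (qmul x x') (qmul y y')) ->
  (forall x y x' y', P x y -> P x' y' -> P (qmul x y') (qmul y x')) ->
  (forall x y, P x y -> P (qconj x) (qconj y)) ->
  (forall x y, P x y -> P (qconj y) (qconj x)) ->
  (forall M, S M -> monomial_with P M) -> forall M, mgen S M -> monomial_with P M.
Proof.
move=> P11 Pdiag Pcross Pconj Pswap SP; apply: gen_closed => //.
- by exists (q1 R), (q1 R); split; [|left].
- move=> _ _ [x [y [Pxy [->|->]]]] [x' [y' [Pxy' [->|->]]]].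
  + by rewrite diagm_mul; do 2!eexists; split; [exact: Pdiag Pxy Pxy'|left].
  + by rewrite diagm_antim_mul; do 2!eexists; split; [exact: Pdiag Pxy Pxy'|right].
  + by rewrite antim_diagm_mul; do 2!eexists; split; [exact: Pcross Pxy Pxy'|right].
  + by rewrite antim_mul; do 2!eexists; split; [exact: Pcross Pxy Pxy'|left].
- move=> _ [x [y [Pxy [->|->]]]].
  + by rewrite mstar_diagm; do 2!eexists; split; [exact: Pconj Pxy|left].
  + by rewrite mstar_antim; do 2!eexists; split; [exact: Pswap Pxy|right].
Qed.

Lemma Mb_mul x y : mmul (Mb x) (Mb y) = diagm (qmul x (qinv y)) (qmul (qinv x) y).
Proof. exact: antim_mul. Qed.

Lemma Mb1_conj h : mmul (mmul (Mb (q1 R)) (diagm h (q1 R))) (Mb (q1 R)) = diagm (q1 R) h.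
Proof. by rewrite /Mb qinv1 antim_diagm_mul antim_mul !qmulq1 !qmul1q. Qed.

Lemma mgen_diagmM S x y : mgen S (diagm x (q1 R)) -> mgen S (diagm y (q1 R)) ->
  mgen S (diagm (qmul x y) (q1 R)).
Proof. by move=> Sx Sy; rewrite -[q1 R]qmulq1 -diagm_mul; apply: gen_mul. Qed.

Lemma mgen_diagmV S x : unitq x -> mgen S (diagm x (q1 R)) ->
  mgen S (diagm (qinv x) (q1 R)).
Proof.
move=> ux Sx; have -> : diagm (qinv x) (q1 R) = mstar (diagm x (q1 R)).
  by rewrite mstar_diagm qconj1 qinvE.
exact: gen_inv.
Qed.

Lemma GKLH_Mb (K L H : quat R -> Prop) b : L b -> GKLH K L H (Mb b).
Proof. by move=> Lb; apply: gen_in; right; exists b. Qed.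

Lemma GKLH_diagm (K L H : quat R -> Prop) h : H h -> GKLH K L H (diagm h (q1 R)).
Proof. by move=> Hh; apply: gen_in; left; exists h; split; [|left]. Qed.

Lemma GKLH_sub (K L H K' L' H' : quat R -> Prop) :
  L' (q1 R) -> (forall b, L b -> L' b) ->
  (forall h, H h -> GKLH K' L' H' (diagm h (q1 R))) ->
  forall M, GKLH K L H M -> GKLH K' L' H' M.
Proof.
move=> L'1 LL' HG; apply: gen_mono => _ [[h [Hh [->|->]]]|[b [Lb ->]]].
- exact: HG.
- by rewrite -Mb1_conj; apply: gen_mul; [apply: gen_mul|]; [apply: GKLH_Mb|apply: HG|apply: GKLH_Mb].
- exact/GKLH_Mb/LL'.
Qed.

End MonomialMatrices.

Section CommutatorSubgroup.
Variables (R : realType) (K : quat R -> Prop).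
Hypotheses (K1 : K (q1 R)) (KM : forall x y, K x -> K y -> K (qmul x y))
  (KV : forall x, K x -> K (qinv x)) (K_unit : forall x, K x -> unitq x).
Implicit Types x y : quat R.
Local Notation C := (commK K).

Lemma reflection_system_self : reflection_system K K.
Proof.
split=> // [x|a b Ka Kb]; last by rewrite /qcirc; auto.
by split; [apply: gen_in | apply: gen_closed].
Qed.

Lemma commK_sub x : C x -> K x.
Proof. by apply: gen_closed => // _ [a [b [Ka Kb ->]]]; auto. Qed.

Lemma commK_commutator a b : K a -> K b ->
  C (qmul (qmul (qmul a b) (qinv a)) (qinv b)).
Proof. by move=> Ka Kb; apply: gen_in; exists a, b. Qed.

Lemma commK_conjg k h : K k -> C h -> C (qmul (qmul k h) (qinv k)).
Proof.
move=> Kk; have uk := K_unit Kk.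
elim=> {h} [_ [a [b [Ka Kb ->]]]| |x y _ Cx _ Cy|x Cx0 Cx].
- have [ua ub] := (K_unit Ka, K_unit Kb).
  by rewrite !qconjgM // !qconjgV //; apply: commK_commutator; auto.
- by rewrite qmulq1 qmulqV //; apply: gen_one.
- by rewrite qconjgM //; apply: gen_mul.
- by rewrite qconjgV //; [apply: gen_inv | apply/K_unit/commK_sub].
Qed.

Lemma commK_swap p u v w : K p -> K u -> K v ->
  C (qmul p (qmul v (qmul u w))) -> C (qmul p (qmul u (qmul v w))).
Proof.
move=> Kp Ku Kv Cpvuw.
have up := K_unit Kp; have uu := K_unit Ku; have uv := K_unit Kv.
have -> : qmul p (qmul u (qmul v w)) =
  qmul (qmul (qmul p (qmul (qmul (qmul u v) (qinv u)) (qinv v))) (qinv p))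
       (qmul p (qmul v (qmul u w))).
  by rewrite !qmulA !qmulKq.
by apply: gen_mul => //; apply: commK_conjg => //; apply: commK_commutator.
Qed.

Lemma commK_rotate x y : K x -> K y -> C (qmul x y) -> C (qmul y x).
Proof.
move=> Kx Ky Cxy; have uy := K_unit Ky.
have -> : qmul y x = qmul (qmul y (qmul x y)) (qinv y) by rewrite !qmulA qmulqV ?qmulq1.
exact: commK_conjg.
Qed.

Lemma H_L_self_commK h : H_L K K h -> C h.
Proof.
case=> _; pose P x y := [/\ K x, K y & C (qmul x y)].
have CV x y : K x -> K y -> C (qmul x y) -> C (qconj (qmul x y)).
  by move=> Kx Ky Cxy; rewrite -qinvE; [apply: gen_inv | apply/K_unit/KM].
have KC x : K x -> K (qconj x) by move=> Kx; rewrite -qinvE; auto.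
move/(@mgen_monomial_with _ P) => [].
- by split; rewrite ?qmulq1 //; apply: gen_one.
- move=> x y x' y' [Kx Ky Cxy] [Kx' Ky' Cxy']; split; auto.
  by rewrite qmulA; apply: commK_swap; rewrite // -qmulA; apply: gen_mul.
- move=> x y x' y' [Kx Ky Cxy] [Kx' Ky' Cxy']; split; auto.
  rewrite qmulA; apply: commK_swap; rewrite // -qmulA.
  by apply: gen_mul => //; apply: commK_rotate.
- move=> x y [Kx Ky Cxy]; split; [exact: KC | exact: KC |].
  by rewrite -qconjM; apply/CV/commK_rotate.
- move=> x y [Kx Ky Cxy]; split; [exact: KC | exact: KC |].
  by rewrite -qconjM; apply: CV.
- move=> _ [b [Kb ->]]; exists b, (qinv b); split; last by right.
  split=> //; first exact: KV.
  by rewrite qmulqV; [apply: gen_one | apply: K_unit].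
- move=> x [y [[_ _ Cxy] [[-> ey]|]]]; first by rewrite -[x]qmulq1 ey.
  by case=> _ _ _ /eqP; rewrite oner_eq0.
Qed.

Lemma commK_H_L_self h : C h -> H_L K K h.
Proof.
move=> Ch; split; first exact: commK_sub.
elim: Ch => {h} [_ [a [b [Ka Kb ->]]]| |x y _ Hx _ Hy|x Cx Hx].
- have [ua ub] := (K_unit Ka, K_unit Kb).
  have -> : diagm (qmul (qmul (qmul a b) (qinv a)) (qinv b)) (q1 R) =
      mmul (mmul (mmul (Mb (qmul a b)) (Mb (q1 R))) (mmul (Mb (q1 R)) (Mb a)))
           (mmul (Mb (q1 R)) (Mb b)).
    rewrite !Mb_mul !diagm_mul qinv1 !qmulq1 !qmul1q !qmulA.
    by rewrite qmulVq //; apply: unitqM.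
  have genMb c : K c -> mgen (fun M => exists b, K b /\ M = Mb b) (Mb c).
    by move=> Kc; apply: gen_in; exists c.
  by do !apply: gen_mul; apply: genMb; auto.
- exact: gen_one.
- exact: mgen_diagmM.
- exact/mgen_diagmV/Hx/K_unit/commK_sub.
Qed.

Lemma H_L_selfE h : H_L K K h <-> C h.
Proof. by split; [apply: H_L_self_commK | apply: commK_H_L_self]. Qed.

Lemma normal_in_of_commK_sub (H : quat R -> Prop) : is_qsubgroup H ->
  (forall x, C x -> H x) -> (forall x, H x -> K x) -> normal_in H K.
Proof.
move=> sgH CH HK; split=> // k h Kk Hh; case: sgH => _ HM _.
have [uk uh] := (K_unit Kk, K_unit (HK _ Hh)).
have -> : qmul (qmul k h) (qinv k) =
    qmul (qmul (qmul (qmul k h) (qinv k)) (qinv h)) h.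
  by rewrite !qmulA qmulVq ?qmulq1.
by apply: HM => //; apply/CH/commK_commutator; auto.
Qed.

Lemma admissible_canonical_self (H : quat R -> Prop) : is_qsubgroup H ->
  (forall x, C x -> H x) -> (forall x, H x -> K x) ->
  admissible K K H /\ canonical_form K K H.
Proof.
move=> sgH CH HK; split; last by move=> b Kb; split=> // _; apply: GKLH_Mb.
split=> [||l Kl]; [exact: normal_in_of_commK_sub | exact: HK |].
by split=> // _; exists l, (q1 R); rewrite qmulq1; case: sgH.
Qed.

Lemma GKLH_self_enlarge (H : quat R -> Prop) : (forall x, H x -> K x) ->
  exists H', [/\ is_qsubgroup H', (forall x, C x -> H' x), (forall x, H' x -> K x)
              & forall M, GKLH K K H' M <-> GKLH K K H M].
Proof.
move=> HK; exists (fun x => K x /\ GKLH K K H (diagm x (q1 R))); split.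
- split=> [|x y [Kx Gx] [Ky Gy]|x [Kx Gx]]; split; auto.
  + exact: gen_one.
  + exact: mgen_diagmM.
  + exact: mgen_diagmV (K_unit Kx) Gx.
- move=> x /commK_H_L_self [Kx Gx]; split=> //.
  by apply: gen_mono Gx => _ [b [Kb ->]]; apply: GKLH_Mb.
- by move=> x [].
- move=> M; split; apply: GKLH_sub => // h; first by case.
  by move=> Hh; apply: GKLH_diagm; split; [apply: HK | apply: GKLH_diagm].
Qed.

End CommutatorSubgroup.

Theorem lemma4p2 (R : realType) (K : quat R -> Prop) :
  finite_subgroup_UH K ->
  [/\ reflection_system K K,
      (forall h, H_L K K h <-> commK K h),
      (forall H : quat R -> Prop,
         is_qsubgroup H -> (forall x, commK K x -> H x) -> (forall x, H x -> K x) ->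
         normal_in H K)
    & (forall G : qmat R -> Prop,
         (exists H : quat R -> Prop, [/\ admissible K K H, canonical_form K K H
                                       & forall M, G M <-> GKLH K K H M])
         <->
         (exists H : quat R -> Prop,
            [/\ is_qsubgroup H, (forall x, commK K x -> H x), (forall x, H x -> K x)
              & forall M, G M <-> GKLH K K H M]))].
Proof.
move=> [[K1 KM KV] K_unit _]; split.
- exact: reflection_system_self.
- exact: H_L_selfE.
- exact: normal_in_of_commK_sub.
move=> G; split=> [[H [[[_ HK _] _ _] _ GE]] | [H [sgH CH HK GE]]].
- have [H' [sgH' CH' H'K E]] := GKLH_self_enlarge K1 KM KV K_unit HK.
  by exists H'; split=> // M; rewrite GE E.
- have [adm can] := admissible_canonical_self K_unit sgH CH HK.
  by exists H.
Qed.
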